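(* Let $A$ be a connected monounary algebra containing no cycle. If $A\not\cong Z$ and $A^{(\infty)}=A$, then $\mathbf V(A)=\mathbf V(E)$.
   Context: A monounary algebra is a pair $(A,f)$ with $A$ a nonempty set and $f:A\to A$; direct products are coordinatewise. It is connected if for all $x,y$ there are $m,n\ge0$ with $f^m(x)=f^n(y)$; it contains a cycle if $f^k(x)=x$ for some $x\in A$, $k\ge1$. A retract of $A$ is a nonempty subalgebra $M$ such that there is an endomorphism $h:A\to M$ with $h|_M=\mathrm{id}$. A retract variety is a class closed under isomorphisms, retracts and direct products; $\mathbf V(\mathcal K)$ is the smallest retract variety containing $\mathcal K$. $A^{(\infty)}$ is the set of $x\in A$ admitting a sequence $x_0=x,x_1,\dots$ in $A$ with $f(x_n)=x_{n-1}$ for all $n\ge1$. $Z=(\mathbb Z,k\mapsto k+1)$; $E$ has universe $\mathbb Z\cup\{(k,1):k\in\mathbb N\}$ with $f(k)=k+1$ on $\mathbb Z$, $f((k,1))=(k-1,1)$ for $k>1$ and $f((1,1))=0$. *)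

From Stdlib Require Import ZArith ClassicalEpsilon.

Record mua := MUA {
  carrier :> Type;
  op : carrier -> carrier;
  carrier_ne : inhabited carrier
}.
Arguments op {m} _.

Definition iter_op {A : mua} (n : nat) (x : A) : A := Nat.iter n (@op A) x.

Definition is_hom {A B : mua} (g : A -> B) : Prop := forall x, g (op x) = op (g x).

Definition isomorphic (A B : mua) : Prop :=
  exists g : A -> B, is_hom g /\ (forall x y, g x = g y -> x = y)
                     /\ (forall y, exists x, g x = y).

Definition sub_closed (A : mua) (S : A -> Prop) : Prop := forall x, S x -> S (op x).

Definition subalg (A : mua) (S : A -> Prop) (cl : sub_closed A S) (ne : exists x, S x) : mua :=
  {| carrier := {x : A | S x};
     op := fun y => exist _ (op (proj1_sig y)) (cl _ (proj2_sig y));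
     carrier_ne := match ne with ex_intro _ x hx => inhabits (exist _ x hx) end |}.

Definition is_retract (A : mua) (S : A -> Prop) (cl : sub_closed A S) (ne : exists x, S x) : Prop :=
  exists h : A -> subalg A S cl ne,
    is_hom h /\ (forall m : subalg A S cl ne, h (proj1_sig m) = m).

Lemma prod_inhabited (I : Type) (F : I -> mua) : inhabited (forall i, F i).
Proof.
  constructor. intro i. exact (epsilon (carrier_ne (F i)) (fun _ => True)).
Qed.

Definition prod_alg (I : Type) (F : I -> mua) : mua :=
  {| carrier := forall i, F i;
     op := fun x i => op (x i);
     carrier_ne := prod_inhabited I F |}.

Definition retract_variety (C : mua -> Prop) : Prop :=
  (forall A B, C A -> isomorphic A B -> C B) /\
  (forall A S cl ne, C A -> is_retract A S cl ne -> C (subalg A S cl ne)) /\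
  (forall (I : Type) (F : I -> mua), (forall i, C (F i)) -> C (prod_alg I F)).

Definition gen_variety (K : mua -> Prop) (B : mua) : Prop :=
  forall C, retract_variety C -> (forall X, K X -> C X) -> C B.

Definition V1 (A : mua) : mua -> Prop := gen_variety (fun X => X = A).

Definition connected (A : mua) : Prop :=
  forall x y : A, exists m n, iter_op m x = iter_op n y.

Definition has_cycle (A : mua) : Prop :=
  exists (x : A) (k : nat), 1 <= k /\ iter_op k x = x.

Definition in_inf (A : mua) (x : A) : Prop :=
  exists s : nat -> A, s 0 = x /\ forall n, op (s (S n)) = s n.

Definition Zalg : mua := {| carrier := Z; op := Z.succ; carrier_ne := inhabits 0%Z |}.

(* E: universe Z ∪ {(k,1) : k >= 1}; inr n encodes (n+1,1). *)
Definition E_op (x : Z + nat) : Z + nat :=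
  match x with
  | inl k => inl (Z.succ k)
  | inr O => inl 0%Z          (* (1,1) |-> 0 *)
  | inr (S n) => inr n        (* (n+2,1) |-> (n+1,1) *)
  end.

Definition Ealg : mua := {| carrier := (Z + nat)%type; op := E_op; carrier_ne := inhabits (inl 0%Z) |}.

From Stdlib Require Import ZArith Lia ClassicalEpsilon ProofIrrelevance FunctionalExtensionality.
Open Scope Z_scope.

(* A connected acyclic algebra carries a level function d with d (f x) = d x + 1,
   and A^(oo) = A gives a section p of f.  Since A is not Z, f is not injective:
   some a <> b have f a = f b.  Every point a yields a homomorphism A -> E sending
   the points below a to the tail of E by their depth and all other points to Z
   by their level; together with a copy of E inside A glued along a and b, this
   makes E a retract of A.  Conversely, these homomorphisms, one for each a, embed
   A into E^A, and an embedding of an algebra with surjective operation splits as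
   soon as there is any homomorphism back, here E^A -> E -> Z -> A. *)

Lemma iter_op_succ_r (A : mua) (n : nat) (x : A) : iter_op (S n) x = iter_op n (op x).
Proof. apply Nat.iter_succ_r. Qed.

Lemma iter_op_add (A : mua) (m n : nat) (x : A) : iter_op (m + n) x = iter_op m (iter_op n x).
Proof. apply Nat.iter_add. Qed.

Lemma least_nat (Q : nat -> Prop) :
  (exists n, Q n) -> exists n, Q n /\ forall j, (j < n)%nat -> ~ Q j.
Proof.
  intros [n Qn]. induction n as [n IH] using (well_founded_induction lt_wf).
  destruct (classic (exists j, (j < n)%nat /\ Q j)) as [[j [ltjn Qj]] | none].
  - exact (IH j ltjn Qj).
  - exists n. split; [exact Qn|]. intros j ltjn Qj. apply none. now exists j.
Qed.

Lemma V1_trans (X Y W : mua) : V1 X Y -> V1 Y W -> V1 X W.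
Proof. intros XY YW C HC HX. apply YW; [exact HC|]. intros U ->. now apply XY. Qed.

Lemma V1_power (X : mua) (I : Type) : V1 X (prod_alg I (fun _ => X)).
Proof. intros C [_ [_ Cprod]] HX. apply Cprod. intros _. now apply HX. Qed.

(* The retract is realised as the subalgebra of fixed points of [e \o h]. *)
Lemma V1_retract (X Y : mua) (e : Y -> X) (h : X -> Y) :
  is_hom e -> is_hom h -> (forall y, h (e y) = y) -> V1 X Y.
Proof.
  intros e_hom h_hom he C [Ciso [Cret _]] HX.
  set (S := fun x : X => e (h x) = x).
  assert (cl : sub_closed X S) by (intros x Sx; unfold S; now rewrite h_hom, e_hom, Sx).
  destruct (carrier_ne Y) as [y0].
  assert (ne : exists x, S x) by (exists (e y0); unfold S; now rewrite he).
  assert (Sim : forall x, S (e (h x))) by (intro x; unfold S; now rewrite he).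
  assert (sig_ext : forall u v : {x | S x}, proj1_sig u = proj1_sig v -> u = v)
    by exact (eq_sig_hprop (fun _ => proof_irrelevance _)).
  apply (Ciso (subalg X S cl ne)).
  - apply Cret; [now apply HX|].
    exists (fun x => exist S (e (h x)) (Sim x)). split.
    + intro x. apply sig_ext. simpl. now rewrite h_hom, e_hom.
    + intros [x Sx]. apply sig_ext. exact Sx.
  - exists (fun m => h (proj1_sig m)). split; [|split].
    + intro m. apply h_hom.
    + intros [x Sx] [x' Sx'] E. apply sig_ext. simpl in *. now rewrite <- Sx, <- Sx', E.
    + intro y. exists (exist S (e (h (e y))) (Sim (e y))). simpl. now rewrite !he.
Qed.

Section SplitEmbedding.

Variables (X P : mua) (e : X -> P) (g : P -> X) (p : X -> X).
Hypotheses (e_hom : is_hom e) (e_inj : forall x y, e x = e y -> x = y).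
Hypotheses (g_hom : is_hom g) (p_section : forall x, op (p x) = x).

Definition hits (u : P) (k : nat) : Prop := exists x, iter_op k u = e x.

(* [u] is sent to [p^k x] where [f^k u = e x] is its first entry into the image
   of [e]; orbits that never enter the image are handled by [g]. *)
Definition retraction_graph (u : P) (z : X) : Prop :=
  (exists k x, iter_op k u = e x /\ (forall j, (j < k)%nat -> ~ hits u j)
               /\ z = Nat.iter k p x)
  \/ ((forall k, ~ hits u k) /\ z = g u).

Lemma hits_op (u : P) (k : nat) : hits (op u) k <-> hits u (S k).
Proof. unfold hits. now rewrite iter_op_succ_r. Qed.

Lemma retraction_graph_total (u : P) : exists z, retraction_graph u z.
Proof.
  destruct (classic (exists k, hits u k)) as [some | none].
  - destruct (least_nat _ some) as [k [[x Hx] least]].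
    exists (Nat.iter k p x). left. now exists k, x.
  - exists (g u). right. split; [|reflexivity]. intros k Hk. apply none. now exists k.
Qed.

Lemma retraction_graph_functional (u : P) (z z' : X) :
  retraction_graph u z -> retraction_graph u z' -> z = z'.
Proof.
  intros [[k [x [Hx [lx ->]]]] | [nx ->]] [[k' [x' [Hx' [lx' ->]]]] | [nx' ->]].
  - assert (k = k') as <-.
    { destruct (Nat.lt_trichotomy k k') as [lt | [eq | gt]]; [| exact eq |].
      - exfalso. apply (lx' k lt). now exists x.
      - exfalso. apply (lx k' gt). now exists x'. }
    rewrite Hx in Hx'. now rewrite (e_inj _ _ Hx').
  - exfalso. apply (nx' k). now exists x.
  - exfalso. apply (nx k'). now exists x'.
  - reflexivity.
Qed.

Lemma retraction_graph_op (u : P) (z : X) :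
  retraction_graph u z -> retraction_graph (op u) (op z).
Proof.
  intros [[[|k] [x [Hx [least ->]]]] | [none ->]].
  - left. exists 0%nat, (op x). simpl in *. split; [now rewrite Hx, e_hom|].
    split; [intros j lt; lia | reflexivity].
  - left. exists k, x. split; [now rewrite <- iter_op_succ_r|]. split.
    + intros j lt hj. apply (least (S j)); [lia|]. now apply hits_op.
    + simpl. now rewrite p_section.
  - right. split; [|now rewrite g_hom]. intros k hk. apply (none (S k)). now apply hits_op.
Qed.

Lemma retraction_graph_e (x : X) : retraction_graph (e x) x.
Proof. left. exists 0%nat, x. split; [reflexivity|]. split; [intros j lt; lia | reflexivity]. Qed.

Lemma split_embedding : exists r : P -> X, is_hom r /\ forall x, r (e x) = x.
Proof.
  set (r := fun u => epsilon (carrier_ne X) (retraction_graph u)).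
  assert (r_graph : forall u, retraction_graph u (r u))
    by (intro u; apply epsilon_spec, retraction_graph_total).
  exists r. split.
  - intro u. apply (retraction_graph_functional (op u)); [apply r_graph|].
    apply retraction_graph_op, r_graph.
  - intro x. apply (retraction_graph_functional (e x)); [apply r_graph|].
    apply retraction_graph_e.
Qed.

End SplitEmbedding.

Lemma iter_op_inj_acyclic (A : mua) (i j : nat) (x : A) :
  ~ has_cycle A -> iter_op i x = iter_op j x -> i = j.
Proof.
  intros acyc E.
  assert (no_loop : forall i j, (i < j)%nat -> iter_op i x <> iter_op j x).
  { intros i0 j0 lt E0. apply acyc. exists (iter_op i0 x), (j0 - i0)%nat.
    split; [lia|]. rewrite <- iter_op_add. now replace (j0 - i0 + i0)%nat with j0 by lia. }
  destruct (Nat.lt_trichotomy i j) as [lt | [eq | gt]]; [| exact eq |].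
  - now destruct (no_loop _ _ lt).
  - now destruct (no_loop _ _ gt).
Qed.

(* [d x] is [n - m] for any [m, n] with [f^m x = f^n c], for a fixed base point [c]. *)
Lemma level_exists (A : mua) :
  connected A -> ~ has_cycle A -> exists d : A -> Z, forall x, d (op x) = d x + 1.
Proof.
  intros conn acyc. destruct (carrier_ne A) as [c].
  set (meet := fun x mn => iter_op (fst mn) x = iter_op (snd mn) c).
  set (mn := fun x => epsilon (inhabits (0, 0)%nat) (meet x)).
  assert (mn_meet : forall x, meet x (mn x)).
  { intro x. apply epsilon_spec. destruct (conn x c) as [m [n E]]. now exists (m, n). }
  assert (meet_unique : forall x m n m' n', iter_op m x = iter_op n c ->
            iter_op m' x = iter_op n' c -> (n + m')%nat = (n' + m)%nat).
  { intros x m n m' n' E E'. apply (iter_op_inj_acyclic A _ _ c acyc).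
    rewrite (Nat.add_comm n m'), (Nat.add_comm n' m), !iter_op_add, <- E, <- E'.
    now rewrite <- !iter_op_add, Nat.add_comm. }
  exists (fun x => Z.of_nat (snd (mn x)) - Z.of_nat (fst (mn x))). intro x.
  assert (Ex := mn_meet x). assert (Eox := mn_meet (op x)). unfold meet in Ex, Eox.
  rewrite <- iter_op_succ_r in Eox.
  assert (H := meet_unique _ _ _ _ _ Ex Eox). lia.
Qed.

Lemma pred_section_exists (A : mua) :
  (forall x : A, in_inf A x) -> exists p : A -> A, forall x, op (p x) = x.
Proof.
  intro inf. exists (fun x => epsilon (carrier_ne A) (fun y => op y = x)). intro x.
  apply epsilon_spec. destruct (inf x) as [s [s0 Hs]]. exists (s 1%nat). now rewrite Hs.
Qed.

Definition E_level (v : Ealg) : Zalg :=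
  match v with inl k => k | inr n => - Z.of_nat n - 1 end.

Lemma E_level_hom : is_hom E_level.
Proof. intros [k | [|n]]; cbn -[Z.of_nat Z.succ Z.sub Z.opp]; lia. Qed.

Section Leveled.

Variables (A : mua) (d : A -> Z) (p : A -> A).
Hypotheses (d_op : forall x, d (op x) = d x + 1) (p_section : forall x, op (p x) = x).

Lemma d_iter (n : nat) (x : A) : d (iter_op n x) = d x + Z.of_nat n.
Proof.
  induction n as [|n IH]; [simpl; lia|].
  change (d (op (iter_op n x)) = d x + Z.of_nat (S n)). rewrite d_op, IH. lia.
Qed.

Definition line (c : A) (k : Z) : A :=
  if 0 <=? k then iter_op (Z.to_nat k) c else Nat.iter (Z.to_nat (- k)) p c.

Lemma line_0 (c : A) : line c 0 = c.
Proof. reflexivity. Qed.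

Lemma line_succ (c : A) (k : Z) : op (line c k) = line c (Z.succ k).
Proof.
  unfold line. destruct (Z.leb_spec 0 k); destruct (Z.leb_spec 0 (Z.succ k)); try lia.
  - now replace (Z.to_nat (Z.succ k)) with (S (Z.to_nat k)) by lia.
  - replace k with (-1) by lia. apply p_section.
  - replace (Z.to_nat (- k)) with (S (Z.to_nat (- Z.succ k))) by lia. apply p_section.
Qed.

Lemma line_iter (c : A) (k : Z) (n : nat) : iter_op n (line c k) = line c (k + Z.of_nat n).
Proof.
  induction n as [|n IH]; [simpl; f_equal; lia|].
  change (op (iter_op n (line c k)) = line c (k + Z.of_nat (S n))).
  rewrite IH, line_succ. f_equal. lia.
Qed.

Lemma d_line (c : A) (k : Z) : d (line c k) = d c + k.
Proof.
  destruct (Z.leb_spec 0 k).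
  - unfold line. rewrite (proj2 (Z.leb_le 0 k)) by lia. rewrite d_iter. lia.
  - assert (E := line_iter c k (Z.to_nat (- k))).
    replace (k + Z.of_nat (Z.to_nat (- k))) with 0 in E by lia.
    apply (f_equal d) in E. rewrite d_iter, line_0 in E. lia.
Qed.

Lemma iso_Z_of_op_injective :
  connected A -> (forall x y : A, op x = op y -> x = y) -> isomorphic A Zalg.
Proof.
  intros conn op_inj. exists d. split; [|split].
  - intro x. simpl. rewrite d_op. lia.
  - intros x y E. destruct (conn x y) as [m [n Emn]].
    assert (Dm := d_iter m x). assert (Dn := d_iter n y). rewrite Emn in Dm.
    assert (m = n) as <- by lia. clear Dm Dn.
    induction m as [|m IH]; [exact Emn|]. apply IH, op_inj, Emn.
  - destruct (carrier_ne A) as [c]. intro t. exists (line c (t - d c)).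
    rewrite d_line. simpl. lia.
Qed.

Definition reaches (x a : A) : Prop := exists n, iter_op n x = a.

Definition to_E (a x : A) : Ealg :=
  if excluded_middle_informative (reaches x a)
  then inr (Z.to_nat (d a - d x)) else inl (d x - d a - 1).

Lemma to_E_hom (a : A) : is_hom (to_E a).
Proof.
  intro x. unfold to_E.
  destruct (excluded_middle_informative (reaches x a)) as [[n Hn] | nx];
  destruct (excluded_middle_informative (reaches (op x) a)) as [[j Hj] | nox].
  - assert (Dn := d_iter n x). assert (Dj := d_iter j (op x)).
    rewrite Hn in Dn. rewrite Hj, d_op in Dj.
    replace (Z.to_nat (d a - d x)) with (S j) by lia. simpl. f_equal. rewrite d_op. lia.
  - destruct n as [|n].
    + simpl in Hn. subst a. replace (Z.to_nat (d x - d x)) with 0%nat by lia.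
      simpl. f_equal. rewrite d_op. lia.
    + exfalso. apply nox. exists n. now rewrite <- iter_op_succ_r.
  - exfalso. apply nx. exists (S j). now rewrite iter_op_succ_r.
  - simpl. f_equal. rewrite d_op. lia.
Qed.

Lemma to_E_self (a : A) : to_E a a = inr 0%nat.
Proof.
  unfold to_E. destruct (excluded_middle_informative (reaches a a)) as [_ | na].
  - f_equal. lia.
  - exfalso. apply na. now exists 0%nat.
Qed.

Lemma to_E_eq_self (a x : A) : to_E a x = inr 0%nat -> x = a.
Proof.
  unfold to_E. destruct (excluded_middle_informative (reaches x a)) as [[n Hn] | _];
    intro E; [|discriminate].
  injection E as E. assert (Dn := d_iter n x). rewrite Hn in Dn.
  replace n with 0%nat in Hn by lia. exact Hn.
Qed.

Section Branch.

Variables (a b : A).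
Hypotheses (a_neq_b : a <> b) (op_a_b : op a = op b).

(* The tail of [E] is the chain below [a], its [Z] the chain through [b]. *)
Definition from_E (v : Ealg) : A :=
  match v with
  | inl k => line b (Z.succ k)
  | inr n => line a (- Z.of_nat n)
  end.

Lemma from_E_hom : is_hom from_E.
Proof.
  intros [k | [|n]]; simpl; rewrite line_succ.
  - reflexivity.
  - rewrite <- (line_succ a 0), line_0, op_a_b. symmetry. exact (line_succ b 0).
  - f_equal. lia.
Qed.

Lemma to_E_from_E (v : Ealg) : to_E a (from_E v) = v.
Proof.
  assert (Dab : d a = d b) by (apply (f_equal d) in op_a_b; rewrite !d_op in op_a_b; lia).
  unfold to_E. destruct v as [k | n]; simpl.
  - destruct (excluded_middle_informative (reaches (line b (Z.succ k)) a)) as [[n Hn] | _].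
    + exfalso. rewrite line_iter in Hn. assert (Dn := f_equal d Hn).
      rewrite d_line in Dn. replace (Z.succ k + Z.of_nat n) with 0 in Hn by lia.
      apply a_neq_b. now rewrite <- Hn.
    + f_equal. rewrite d_line. lia.
  - destruct (excluded_middle_informative (reaches (line a (- Z.of_nat n)) a)) as [_ | na].
    + f_equal. rewrite d_line. lia.
    + exfalso. apply na. exists n. rewrite line_iter.
      now replace (- Z.of_nat n + Z.of_nat n) with 0 by lia.
Qed.

Lemma V1_A_E : V1 A Ealg.
Proof. exact (V1_retract A Ealg from_E (to_E a) from_E_hom (to_E_hom a) to_E_from_E). Qed.

End Branch.

Definition to_power (x : A) : prod_alg A (fun _ => Ealg) := fun a => to_E a x.

Lemma to_power_hom : is_hom to_power.
Proof. intro x. apply functional_extensionality_dep. intro a. apply to_E_hom. Qed.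

Lemma to_power_inj (x y : A) : to_power x = to_power y -> x = y.
Proof.
  intro E. apply (to_E_eq_self y). rewrite <- (to_E_self y).
  exact (f_equal (fun u => u y) E).
Qed.

Lemma V1_E_A : V1 Ealg A.
Proof.
  destruct (carrier_ne A) as [c].
  set (g := fun u : prod_alg A (fun _ => Ealg) => line c (E_level (u c))).
  assert (g_hom : is_hom g).
  { intro u. unfold g. rewrite line_succ. f_equal. apply E_level_hom. }
  destruct (split_embedding A _ to_power g p to_power_hom to_power_inj g_hom p_section)
    as [r [r_hom r_split]].
  apply (V1_trans _ (prod_alg A (fun _ => Ealg))); [apply V1_power|].
  exact (V1_retract _ _ _ _ to_power_hom r_hom r_split).
Qed.

Lemma branch_exists :
  connected A -> ~ isomorphic A Zalg -> exists a b : A, a <> b /\ op a = op b.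
Proof.
  intros conn not_Z. apply NNPP. intro none. apply not_Z, (iso_Z_of_op_injective conn).
  intros x y E. apply NNPP. intro neq. apply none. now exists x, y.
Qed.

End Leveled.

Theorem lemma4p1 (A : mua) :
  connected A -> ~ has_cycle A ->
  ~ isomorphic A Zalg ->
  (forall x : A, in_inf A x) ->
  forall B : mua, V1 A B <-> V1 Ealg B.
Proof.
  intros conn acyc not_Z inf B.
  destruct (level_exists A conn acyc) as [d d_op].
  destruct (pred_section_exists A inf) as [p p_section].
  destruct (branch_exists A d p d_op p_section conn not_Z) as [a [b [a_neq_b op_a_b]]].
  assert (VAE := V1_A_E A d p d_op p_section a b a_neq_b op_a_b).
  assert (VEA := V1_E_A A d p d_op p_section).
  split; apply V1_trans; assumption.
Qed.
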